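(* Let $\mathcal H=(\{H_i\}_{i\in[k]};\mathcal Q_1,\dots,\mathcal Q_n)$ be a finite multi-sorted structure in which every sort $H_i$ occurs among $\mathcal Q_1,\dots,\mathcal Q_n$ as a unary relation, and let $p$ be a prime. Then: (1) $\mathcal H$ has a Mal'tsev polymorphism if and only if $b(\mathcal H)$ has a Mal'tsev polymorphism; (2) $\mathcal H$ is $p$-rigid if and only if $b(\mathcal H)$ is $p$-rigid; (3) if $\mathcal H$ is strongly $p$-rectangular, then so is $b(\mathcal H)$.
   Context: The binarization $b(\mathcal H)$ is the multi-sorted structure whose sorts are the relations $\mathcal Q_1,\dots,\mathcal Q_n$ (as sets of tuples) and whose relations are, for all $i\le j$, $s\in[\mathrm{ar}(\mathcal Q_i)]$, $t\in[\mathrm{ar}(\mathcal Q_j)]$, $\mathcal R^{ij}_{st}=\{(\mathbf a,\mathbf b):\mathbf a\in\mathcal Q_i,\mathbf b\in\mathcal Q_j,\mathbf a[s]=\mathbf b[t]\}\subseteq\mathcal Q_i\times\mathcal Q_j$. A Mal'tsev polymorphism of a multi-sorted structure is a family $f=\{f_i\}$, $f_i:H_i^3\to H_i$, each satisfying $f_i(a,a,b)=f_i(b,a,a)=b$, such that applying $f$ coordinatewise (with $f_{i_j}$ in a coordinate of sort $i_j$) to any three tuples of any relation gives a tuple of that relation. $p$-rigid: no automorphism $\pi=\{\pi_i\}$ of order $p$ (each $\pi_i$ identity or of order $p$, not all identity). $\langle\mathcal H\rangle_p$: relations defined by formulas $\exists^{\equiv p}\mathbf y_1\cdots\exists^{\equiv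 p}\mathbf y_s\Phi$, $\Phi$ a conjunction of atomic formulas (relations of $\mathcal H$, equality on a sort), respecting sorts, where $\exists^{\equiv p}\mathbf y\Psi(\mathbf x,\mathbf y)$ holds at $\mathbf a$ iff the number of $\mathbf b$ with $\Psi(\mathbf a,\mathbf b)$ is not divisible by $p$. A relation of arity $m\ge2$ is rectangular if for every nonempty $I\subsetneq[m]$, $(\mathbf a,\mathbf c),(\mathbf a,\mathbf d),(\mathbf b,\mathbf c)\in\mathcal R$ implies $(\mathbf b,\mathbf d)\in\mathcal R$ ($\mathbf a,\mathbf b$ on $I$, $\mathbf c,\mathbf d$ on the complement). Strongly $p$-rectangular: every relation of arity $\ge2$ in $\langle\mathcal H\rangle_p$ is rectangular. *)

From mathcomp Require Import all_boot all_order all_fingroup.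
Set Implicit Arguments. Unset Strict Implicit. Unset Printing Implicit Defensive.

Unset Implicit Arguments.
Record msstr := MSStr {
  ms_S : finType;
  ms_sort : ms_S -> finType;
  ms_RI : Type;
  ms_ar : ms_RI -> nat;
  ms_sig : forall r, 'I_(ms_ar r) -> ms_S;
  ms_rel : forall r, pred {dffun forall j : 'I_(ms_ar r), ms_sort (ms_sig r j)}
}.
Set Implicit Arguments.
Arguments ms_sort M s : rename.
Arguments ms_ar M r : rename.
Arguments ms_sig M r j : rename.
Arguments ms_rel M r _ : rename.

Definition tup (M : msstr) (r : ms_RI M) :=
  {dffun forall j : 'I_(ms_ar M r), ms_sort M (ms_sig M r j)}.

Definition scast (S : Type) (T : S -> Type) (s1 s2 : S) (e : s1 = s2) (x : T s1)
  : T s2 := ecast z (T z) e x.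

Definition hEq (S : eqType) (T : S -> eqType) (s1 s2 : S) (x : T s1) (y : T s2)
  : bool :=
  match s1 =P s2 with
  | ReflectT e => @scast S T s1 s2 e x == y
  | ReflectF _ => false
  end.

Definition maltsev_pol (M : msstr)
  (f : forall s, ms_sort M s -> ms_sort M s -> ms_sort M s -> ms_sort M s) :=
  (forall s (a b : ms_sort M s), f s a a b = b /\ f s b a a = b) /\
  (forall r (x y z : @tup M r), ms_rel M r x -> ms_rel M r y -> ms_rel M r z ->
     ms_rel M r (finfun (fun j => f (ms_sig M r j) (x j) (y j) (z j)) : @tup M r)).

Definition has_maltsev (M : msstr) := exists f, @maltsev_pol M f.

Definition ms_aut (M : msstr) (pi : forall s, {perm ms_sort M s}) :=
  forall r (x : @tup M r),
    ms_rel M r x = ms_rel M r (finfun (fun j => pi (ms_sig M r j) (x j)) : @tup M r).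

Definition aut_of_order (p : nat) (M : msstr) (pi : forall s, {perm ms_sort M s}) :=
  ms_aut pi /\ (forall s, pi s = 1%g \/ #[pi s]%g = p) /\ (exists s, pi s != 1%g).

Definition p_rigid (p : nat) (M : msstr) := ~ exists pi, @aut_of_order p M pi.

Inductive atom (M : msstr) (V : finType) (vs : V -> ms_S M) :=
| ARel (r : ms_RI M) (args : 'I_(ms_ar M r) -> V)
       (h : forall j, vs (args j) = ms_sig M r j)
| AEq (u v : V) (h : vs u = vs v).

Definition assign (M : msstr) (V : finType) (vs : V -> ms_S M) :=
  {dffun forall v : V, ms_sort M (vs v)}.

Definition atom_sat (M : msstr) (V : finType) (vs : V -> ms_S M)
  (a : assign vs) (t : atom vs) : bool :=
  match t with
  | ARel r args h =>
      ms_rel M r (finfun (fun j => @scast _ (ms_sort M) _ _ (h j) (a (args j))) : @tup M r)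
  | AEq u v h => @scast _ (ms_sort M) _ _ h (a u) == a v
  end.

(* blocks_sat p Phi [:: B1; ...; Bs] a  is the value at (the restriction
   to the variables outside B1,...,Bs of) a of
      exists^{=p} B1 ... exists^{=p} Bs Phi,
   where exists^{=p} y Psi holds iff the number of values of y satisfying
   Psi is not divisible by p. *)
Fixpoint blocks_sat (p : nat) (M : msstr) (V : finType) (vs : V -> ms_S M)
  (Phi : assign vs -> bool) (bs : seq {set V}) (a : assign vs) : bool :=
  match bs with
  | [::] => Phi a
  | B :: rest =>
      #|[pred b : assign vs |
          [forall v, (v \notin B) ==> (b v == a v)] && blocks_sat p Phi rest b]|
        %% p != 0
  end.

(* A p-definition of an m-ary relation: free variables fv 0,...,fv (m-1)
   (distinct), quantifier blocks (outermost first), and a conjunction of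
   atoms; every variable is either free or bound by exactly one block. *)
Record ppdef (M : msstr) (m : nat) := PPDef {
  pd_V : finType;
  pd_vs : pd_V -> ms_S M;
  pd_fv : 'I_m -> pd_V;
  pd_blocks : seq {set pd_V};
  pd_atoms : seq (atom pd_vs);
  pd_fv_inj : injective pd_fv;
  pd_part : forall v,
     ((v \in codom pd_fv) : nat) + count (fun B : {set pd_V} => v \in B) pd_blocks = 1
}.

Definition pd_tup (M : msstr) (m : nat) (D : ppdef M m) :=
  {dffun forall j : 'I_m, ms_sort M (pd_vs (pd_fv D j))}.

Definition pd_rel (p : nat) (M : msstr) (m : nat) (D : ppdef M m) (x : pd_tup D)
  : bool :=
  [exists a : assign (@pd_vs _ _ D),
     [forall j, a (pd_fv D j) == x j] &&
     blocks_sat p (fun b => all (atom_sat b) (pd_atoms D)) (pd_blocks D) a].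

Definition rectangular (m : nat) (T : 'I_m -> finType)
  (R : pred {dffun forall j : 'I_m, T j}) :=
  forall I : {set 'I_m}, I != set0 -> I != setT ->
  forall t1 t2 t3 t4 : {dffun forall j : 'I_m, T j},
    (forall j, j \in I -> t1 j = t2 j /\ t3 j = t4 j) ->
    (forall j, j \notin I -> t1 j = t3 j /\ t2 j = t4 j) ->
    R t1 -> R t2 -> R t3 -> R t4.

Definition strongly_p_rect (p : nat) (M : msstr) :=
  forall m (D : ppdef M m), 2 <= m -> rectangular (@pd_rel p M m D).

Section Pres.
Local Unset Implicit Arguments.
Variables (k : nat) (H : 'I_k -> finType) (n : nat) (ar : 'I_n -> nat)
  (sig : forall r : 'I_n, 'I_(ar r) -> 'I_k)
  (Q : forall r : 'I_n, pred {dffun forall j : 'I_(ar r), H (sig r j)}).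

Definition mkH : msstr := @MSStr 'I_k H 'I_n ar sig Q.

Definition bsort (i : 'I_n) : finType :=
  {x : {dffun forall j : 'I_(ar i), H (sig i j)} | Q i x}.

Record bidx := BIdx {
  bi : 'I_n; bj : 'I_n; bs : 'I_(ar bi); bt : 'I_(ar bj); ble : (bi <= bj)%N }.

Definition bsig (r : bidx) (c : 'I_2) : 'I_n := if val c == 0 then bi r else bj r.

Definition brel (r : bidx) (u : {dffun forall c : 'I_2, bsort (bsig r c)}) : bool :=
  @hEq 'I_k (fun i => H i : eqType) _ _ (val (u ord0) (bs r)) (val (u ord_max) (bt r)).

Definition binarize : msstr :=
  @MSStr 'I_n bsort bidx (fun _ => 2) bsig brel.
End Pres.
Arguments mkH {k H n ar sig} Q.
Arguments binarize {k H n ar sig} Q.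

(* The unary relations Q_{u i} = H_i identify each sort H_i with a sort of
   b(H).  A polymorphism or automorphism of H acts coordinatewise on the tuples
   of every Q_l, giving one of b(H).  Conversely, any two coordinates of
   tuples of b(H) are linked by some binary relation R^{ij}_{st}, so a
   polymorphism of b(H) preserves equality of coordinates: it acts
   coordinatewise through its restriction to the unary sorts.  For (3), a
   parity pp-definition over b(H) becomes one over H by splitting every
   variable of sort Q_l into ar(Q_l) variables constrained by Q_l and turning
   each R^{ij}_{st} into an equality; splitting is a bijection on satisfying
   assignments, so all parity counts agree, and rectangularity pulls back
   along the injective coordinatewise encoding of tuples. *)

From mathcomp Require Import all_boot all_order all_fingroup.
From mathcomp Require Import cyclic.

Set Implicit Arguments. Unset Strict Implicit. Unset Printing Implicit Defensive.

Lemma expg_prime_eq1 (gT : finGroupType) (x : gT) p : prime p ->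
  (x ^+ p == 1)%g = (x == 1)%g || (#[x]%g == p).
Proof.
move=> p_pr; rewrite -order_dvdn -order_eq1.
by apply/idP/orP => [/(primeP p_pr).2/orP | [] /eqP ->].
Qed.

Lemma exists_neq1 (S : finType) (gT : S -> finGroupType) (f : forall s, gT s) :
  (exists s, f s != 1%g) <-> ~ (forall s, f s = 1%g).
Proof.
split=> [[s /eqP fs1] f1 | nf1]; first exact/fs1/f1.
apply/existsP; rewrite -negb_forall; apply/negP => /forallP f1.
by apply: nf1 => s; apply/eqP.
Qed.

Definition ternary_pol (M : msstr)
  (f : forall s, ms_sort M s -> ms_sort M s -> ms_sort M s -> ms_sort M s) :=
  forall r (x y z : @tup M r), ms_rel M r x -> ms_rel M r y -> ms_rel M r z ->
    ms_rel M r (finfun (fun j => f (ms_sig M r j) (x j) (y j) (z j)) : @tup M r).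
Arguments ternary_pol : clear implicits.

Lemma ms_aut_pol (M : msstr) (pi : forall s, {perm ms_sort M s}) :
  ms_aut pi -> ternary_pol M (fun s a (_ _ : ms_sort M s) => pi s a).
Proof. by move=> pi_aut r x y z; rewrite pi_aut. Qed.

Lemma aut_of_orderP p (M : msstr) (pi : forall s, {perm ms_sort M s}) : prime p ->
  aut_of_order p pi <->
  [/\ ms_aut pi, forall s, (pi s ^+ p)%g = 1%g & ~ forall s, pi s = 1%g].
Proof.
move=> p_pr; have piX s : (pi s ^+ p)%g = 1%g <-> pi s = 1%g \/ #[pi s]%g = p.
  split=> [/eqP | pi_s]; first by rewrite expg_prime_eq1 // => /orP[]/eqP; auto.
  by apply/eqP; rewrite expg_prime_eq1 //; case: pi_s => ->; rewrite eqxx ?orbT.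
split=> [[pi_aut [pi_ord pi_nt]] | [pi_aut pi_ord pi_nt]].
  by split=> [|s|]; [|apply/piX|apply/exists_neq1].
by split=> //; split=> [s|]; [apply/piX|apply/exists_neq1].
Qed.

Lemma eq_aut_of_order p (M : msstr) (pi rho : forall s, {perm ms_sort M s}) :
  (forall s, pi s = rho s) -> aut_of_order p pi -> aut_of_order p rho.
Proof.
move=> e [pi_aut [pi_ord [s pi_s]]]; split; last split.
- move=> r x; rewrite pi_aut; congr (ms_rel M r _); apply/ffunP => j.
  by rewrite !ffunE e.
- by move=> s'; rewrite -e.
- by exists s; rewrite -e.
Qed.

Section TaggedSorts.
Variables (k : nat) (H : 'I_k -> finType).
Local Notation tg := (Tagged H).

Lemma hEq_Tagged i j (x : H i) (y : H j) :
  @hEq 'I_k (fun i => H i : eqType) i j x y = (tg x == tg y).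
Proof.
rewrite /hEq; case: eqP => [e | ne]; first by case: j / e y => y; rewrite eq_Tagged.
by apply/esym/negbTE/eqP => /(congr1 tag).
Qed.

Lemma Tagged_inj i (x y : H i) : tg x = tg y -> x = y.
Proof. by move/eqP; rewrite eq_Tagged => /eqP. Qed.

Lemma Tagged_scast i j (e : i = j) (x : H i) :
  tg (@scast _ (fun i => H i) _ _ e x) = tg x.
Proof. by case: j / e. Qed.

Lemma scast_eqE i j (e : i = j) (x : H i) (y : H j) :
  (@scast _ (fun i => H i) _ _ e x == y) = (tg x == tg y).
Proof. by case: j / e y => y; rewrite eq_Tagged. Qed.

Lemma Tagged_congr1 (f : forall i, H i -> H i) i1 i2 (x1 : H i1) (x2 : H i2) :
  tg x1 = tg x2 -> tg (f i1 x1) = tg (f i2 x2).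
Proof. by move=> e; have /= ei := congr1 tag e; subst i2; move/Tagged_inj: e ->. Qed.

Lemma Tagged_congr3 (f : forall i, H i -> H i -> H i -> H i) i1 i2
  (x1 y1 z1 : H i1) (x2 y2 z2 : H i2) :
  tg x1 = tg x2 -> tg y1 = tg y2 -> tg z1 = tg z2 ->
  tg (f i1 x1 y1 z1) = tg (f i2 x2 y2 z2).
Proof.
move=> e; have /= ei := congr1 tag e; subst i2.
by move: e => /Tagged_inj -> /Tagged_inj -> /Tagged_inj ->.
Qed.

Lemma Tagged_inj1 (f : forall i, H i -> H i) i1 i2 (x1 : H i1) (x2 : H i2) :
  (forall i, injective (f i)) -> tg (f i1 x1) = tg (f i2 x2) -> tg x1 = tg x2.
Proof.
by move=> f_inj e; have /= ei := congr1 tag e; subst i2; move/Tagged_inj/f_inj: e ->.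
Qed.

End TaggedSorts.

Section Binarization.
Local Unset Implicit Arguments.
Variables (k : nat) (H : 'I_k -> finType) (n : nat) (ar : 'I_n -> nat)
  (sig : forall r : 'I_n, 'I_(ar r) -> 'I_k)
  (Q : forall r : 'I_n, pred {dffun forall j : 'I_(ar r), H (sig r j)}).
Local Set Implicit Arguments.

Local Notation BS := (bsort k H n ar sig Q).
Local Notation tg := (Tagged H).

Definition bpair (r : bidx n ar) (X : BS (bi n ar r)) (Y : BS (bj n ar r)) :
    {dffun forall c : 'I_2, BS (bsig n ar r c)} :=
  finfun (fun c => match c as c0 return BS (bsig n ar r c0) with
    Ordinal m m_lt =>
      match m as m0 return forall lt0 : m0 < 2, BS (bsig n ar r (Ordinal lt0)) with
      | 0 => fun _ => X | _.+1 => fun _ => Y end m_lt end).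

Lemma brelE r (u : {dffun forall c : 'I_2, BS (bsig n ar r c)}) :
  brel k H n ar sig Q r u =
  (tg (val (u ord0) (bs n ar r)) == tg (val (u ord_max) (bt n ar r))).
Proof. exact: hEq_Tagged. Qed.

(* Any two coordinates s1, s2 of sorts l1, l2 are linked by a binary relation
   of b(H), namely R^{l1 l2}_{s1 s2} or R^{l2 l1}_{s2 s1}. *)
Lemma bpol_Tagged (g : forall l, BS l -> BS l -> BS l -> BS l) :
  ternary_pol (binarize Q) g ->
  forall l1 l2 s1 s2 (X1 Y1 Z1 : BS l1) (X2 Y2 Z2 : BS l2),
  tg (val X1 s1) = tg (val X2 s2) -> tg (val Y1 s1) = tg (val Y2 s2) ->
  tg (val Z1 s1) = tg (val Z2 s2) ->
  tg (val (g l1 X1 Y1 Z1) s1) = tg (val (g l2 X2 Y2 Z2) s2).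
Proof.
move=> g_pol l1 l2 s1 s2 X1 Y1 Z1 X2 Y2 Z2.
wlog l12 : l1 l2 s1 s2 X1 Y1 Z1 X2 Y2 Z2 / l1 <= l2 => [sym | eX eY eZ].
  by move=> *; case: (leqP l1 l2) => [|/ltnW] l12; [|symmetry]; apply: sym.
pose r := BIdx n ar l1 l2 s1 s2 l12.
have := g_pol r (@bpair r X1 X2) (@bpair r Y1 Y2) (@bpair r Z1 Z2).
by rewrite /= !brelE !ffunE /= => g_r; apply/eqP/g_r; apply/eqP.
Qed.

Section Lift.
Local Unset Implicit Arguments.
Variable f : forall i, H i -> H i -> H i -> H i.
Hypothesis f_pol : ternary_pol (mkH Q) f.
Local Set Implicit Arguments.

Definition blift (l : 'I_n) (X Y Z : BS l) : BS l :=
  Sub (finfun (fun s => f (sig l s) (val X s) (val Y s) (val Z s)))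
      (f_pol l _ _ _ (valP X) (valP Y) (valP Z)).

Lemma val_blift l (X Y Z : BS l) :
  val (blift X Y Z) = finfun (fun s => f (sig l s) (val X s) (val Y s) (val Z s)).
Proof. exact: SubK. Qed.

Lemma blift_pol : ternary_pol (binarize Q) blift.
Proof.
move=> r x y z; rewrite /= !brelE !ffunE /=.
by move=> /eqP ex /eqP ey /eqP ez; apply/eqP/Tagged_congr3.
Qed.

End Lift.

Section UnarySorts.
Local Unset Implicit Arguments.
Variable ur : 'I_k -> 'I_n.
Hypothesis ur_ar : forall i, ar (ur i) = 1.
Hypothesis ur_sig : forall i j, sig (ur i) j = i.
Hypothesis ur_full : forall i x, Q (ur i) x.
Local Set Implicit Arguments.

Definition unary_coord i : 'I_(ar (ur i)) := cast_ord (esym (ur_ar i)) ord0.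

Definition to_unary i (a : H i) : BS (ur i) :=
  Sub (finfun (fun j => @scast _ (fun i => H i) _ _ (esym (ur_sig i j)) a)) (ur_full _ _).

Definition of_unary i (X : BS (ur i)) : H i :=
  @scast _ (fun i => H i) _ _ (ur_sig i (unary_coord i)) (val X (unary_coord i)).

Lemma unary_coordE i (j : 'I_(ar (ur i))) : j = unary_coord i.
Proof.
apply: ord_inj; rewrite /unary_coord /=.
have : nat_of_ord j < 1 by rewrite -(ur_ar i) ltn_ord.
by case: (nat_of_ord j).
Qed.

Lemma Tagged_to_unary i (a : H i) j : tg (val (to_unary a) j) = tg a.
Proof. by rewrite SubK ffunE Tagged_scast. Qed.

Lemma Tagged_of_unary i (X : BS (ur i)) j : tg (of_unary X) = tg (val X j).
Proof. by rewrite Tagged_scast (unary_coordE j). Qed.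

Lemma to_unaryK i : cancel (@to_unary i) (@of_unary i).
Proof.
move=> a; apply: Tagged_inj.
by rewrite (Tagged_of_unary _ (unary_coord i)) Tagged_to_unary.
Qed.

Lemma of_unaryK i : cancel (@of_unary i) (@to_unary i).
Proof.
move=> X; apply/val_inj/ffunP => j; apply: Tagged_inj.
by rewrite Tagged_to_unary (Tagged_of_unary _ j).
Qed.

Definition bres (g : forall l, BS l -> BS l -> BS l -> BS l) i (a b c : H i) : H i :=
  of_unary (g (ur i) (to_unary a) (to_unary b) (to_unary c)).

Lemma val_bpol (g : forall l, BS l -> BS l -> BS l -> BS l) :
  ternary_pol (binarize Q) g -> forall l (X Y Z : BS l),
  val (g l X Y Z) = finfun (fun s => bres g (val X s) (val Y s) (val Z s)).
Proof.
move=> g_pol l X Y Z; apply/ffunP => s; apply: Tagged_inj.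
rewrite ffunE (Tagged_of_unary _ (unary_coord _)).
by apply: bpol_Tagged; rewrite ?Tagged_to_unary.
Qed.

Lemma maltsev_blift f (f_malt : @maltsev_pol (mkH Q) f) :
  @maltsev_pol (binarize Q) (blift f_malt.2).
Proof.
split=> [l X Y|]; last exact: blift_pol.
by split; apply/val_inj/ffunP => s; rewrite val_blift ffunE;
  case: (f_malt.1 _ (val X s) (val Y s)).
Qed.

Lemma maltsev_bres g : @maltsev_pol (binarize Q) g -> @maltsev_pol (mkH Q) (bres g).
Proof.
move=> [g_id g_pol]; split=> [i a b | l x y z Qx Qy Qz].
  by rewrite /bres; case: (g_id _ (to_unary a) (to_unary b)) => -> ->; rewrite to_unaryK.
have := valP (g l (Sub x Qx) (Sub y Qy) (Sub z Qz)).
by rewrite val_bpol // !SubK.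
Qed.

Lemma has_maltsev_binarize : has_maltsev (mkH Q) <-> has_maltsev (binarize Q).
Proof.
split=> [[f f_malt] | [g /maltsev_bres g_malt]]; last by exists (bres g).
by exists (blift f_malt.2); apply: maltsev_blift.
Qed.

Section AutomorphismLift.
Local Unset Implicit Arguments.
Variable pi : forall i, {perm H i}.
Hypothesis pi_aut : @ms_aut (mkH Q) pi.
Local Set Implicit Arguments.

Lemma bperm_inj l : injective (fun X : BS l => blift (ms_aut_pol pi_aut) X X X).
Proof.
move=> X Y /(congr1 val); rewrite !val_blift => /ffunP e.
by apply/val_inj/ffunP => s; move: (e s); rewrite !ffunE => /perm_inj.
Qed.

Definition bperm l : {perm BS l} := perm (@bperm_inj l).

Lemma val_bperm l (X : BS l) :
  val (bperm l X) = finfun (fun s => pi (sig l s) (val X s)).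
Proof. by rewrite permE val_blift. Qed.

Lemma val_bpermX m l (X : BS l) :
  val ((bperm l ^+ m)%g X) = finfun (fun s => (pi (sig l s) ^+ m)%g (val X s)).
Proof.
apply/ffunP => s; rewrite ffunE !permX; elim: m => [|m IHm] /=; first by [].
by rewrite val_bperm ffunE IHm.
Qed.

Lemma bperm_aut : @ms_aut (binarize Q) bperm.
Proof.
move=> r u; rewrite /= !brelE !ffunE.
rewrite !val_bperm !ffunE; apply/eqP/eqP; first exact: (Tagged_congr1 pi).
by apply: (Tagged_inj1 (f := fun i => pi i)) => i; apply: perm_inj.
Qed.

Lemma bpermX_eq1 m :
  (forall l, (bperm l ^+ m)%g = 1%g) <-> (forall i, (pi i ^+ m)%g = 1%g).
Proof.
split=> [bm1 i | pim1 l].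
  apply/permP => a; rewrite perm1; apply: Tagged_inj.
  move: (bm1 (ur i)).
  move=> /(congr1 (fun q : {perm BS (ur i)} => val (q (to_unary a)) (unary_coord i))).
  rewrite val_bpermX perm1 ffunE => e.
  rewrite -[in RHS](Tagged_to_unary a (unary_coord i)) -e.
  by apply: (Tagged_congr1 (fun i => pi i ^+ m)%g); rewrite Tagged_to_unary.
apply/permP => X; apply/val_inj/ffunP => s.
by rewrite val_bpermX ffunE pim1 !perm1.
Qed.

Lemma aut_of_order_bperm p : prime p ->
  @aut_of_order p (binarize Q) bperm <-> @aut_of_order p (mkH Q) pi.
Proof.
move=> p_pr; have bperm_eq1 : (forall l, bperm l = 1%g) <-> (forall i, pi i = 1%g).
  by split=> e1 x; rewrite -[LHS]expg1; move: x;
    apply/(bpermX_eq1 1) => y; rewrite expg1 e1.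
split=> /(aut_of_orderP _ p_pr) [_ eX1 not_eq1]; apply/(aut_of_orderP _ p_pr).
  by split=> [||/bperm_eq1]; [exact: pi_aut | exact/bpermX_eq1 |].
by split=> [||/bperm_eq1]; [exact: bperm_aut | exact/bpermX_eq1 |].
Qed.

End AutomorphismLift.

Section AutomorphismRestriction.
Local Unset Implicit Arguments.
Variable sigma : forall l, {perm BS l}.
Hypothesis sigma_aut : @ms_aut (binarize Q) sigma.
Local Set Implicit Arguments.

Local Notation sigma3 := (fun l (X _ _ : BS l) => sigma l X).

Lemma bres_perm_inj i : injective (fun a : H i => bres sigma3 a a a).
Proof.
apply: inj_comp (can_inj (@of_unaryK i)) _.
exact: inj_comp perm_inj (can_inj (@to_unaryK i)).
Qed.

Definition bres_perm i : {perm H i} := perm (@bres_perm_inj i).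

Lemma val_sigma l (X : BS l) :
  val (sigma l X) = finfun (fun s => bres_perm (sig l s) (val X s)).
Proof.
rewrite (val_bpol (ms_aut_pol sigma_aut) X X X); apply/ffunP => s.
by rewrite !ffunE permE.
Qed.

Lemma bres_perm_aut : @ms_aut (mkH Q) bres_perm.
Proof.
move=> l x /=; apply/idP/idP => [Qx | Qpix].
  by have := valP (sigma l (Sub x Qx)); rewrite val_sigma SubK.
set Y := ((sigma l)^-1)%g (Sub _ Qpix : BS l).
have : val (sigma l Y) = _ := congr1 val (permKV (sigma l) _).
rewrite val_sigma SubK => /ffunP e.
suff -> : x = val Y by apply: valP.
by apply/ffunP => s; move: (e s); rewrite !ffunE => /perm_inj.
Qed.

Lemma bperm_bres l : bperm bres_perm_aut l = sigma l.
Proof. by apply/permP => X; apply: val_inj; rewrite val_bperm val_sigma. Qed.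

End AutomorphismRestriction.

Lemma p_rigid_binarize p : prime p -> p_rigid p (mkH Q) <-> p_rigid p (binarize Q).
Proof.
move=> p_pr; split=> [rigidH [sigma sigma_ord] | rigidB [pi pi_ord]].
  have sigma_aut := sigma_ord.1; apply: rigidH; exists (bres_perm sigma).
  apply/(aut_of_order_bperm (bres_perm_aut sigma_aut) p_pr).
  by apply: eq_aut_of_order sigma_ord => l; rewrite bperm_bres.
by apply: rigidB; exists (bperm pi_ord.1); apply/aut_of_order_bperm.
Qed.

End UnarySorts.
End Binarization.

Lemma blocks_sat_witness p (M : msstr) (V : finType) (vs : V -> ms_S M)
  (Phi : assign vs -> bool) bs a :
  blocks_sat p Phi bs a -> exists b, Phi b.
Proof.
elim: bs a => [|B bs IH] a /=; first by exists a.
set S := [pred b : assign vs | _ && blocks_sat p Phi bs b].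
case: (pickP S).
  by move=> b /andP[_ /IH].
by move/eq_card0 ->; rewrite mod0n eqxx.
Qed.

Lemma pd_rel_witness p (M : msstr) m (D : ppdef M m) (x : pd_tup D) :
  pd_rel p x -> exists b, all (atom_sat b) (pd_atoms D).
Proof. by case/existsP => a /andP[_ /blocks_sat_witness]. Qed.

Lemma rectangular_pullback m m' (T : 'I_m -> finType) (T' : 'I_m' -> finType)
  (R : pred {dffun forall j, T j}) (R' : pred {dffun forall j, T' j})
  (F : {dffun forall j, T j} -> {dffun forall j, T' j}) (c : 'I_m' -> 'I_m) :
  injective F ->
  (forall (x y : {dffun forall j, T j}) i, x (c i) = y (c i) -> F x i = F y i) ->
  (forall x, R x = R' (F x)) -> (1 < m' -> rectangular R') -> rectangular R.
Proof.
move=> F_inj F_loc RF R'_rect I _ _ t1 t2 t3 t4 in_I out_I r1 r2 r3.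
set I' := [set i | c i \in I].
have F_in i : i \in I' -> F t1 i = F t2 i /\ F t3 i = F t4 i.
  by rewrite inE => /in_I[e12 e34]; split; apply: F_loc.
have F_out i : i \notin I' -> F t1 i = F t3 i /\ F t2 i = F t4 i.
  by rewrite inE => /out_I[e13 e24]; split; apply: F_loc.
have [I'0 | I'n0] := eqVneq I' set0.
  suff -> : t4 = t2 by [].
  by apply/F_inj/ffunP => i; have /F_out[_ ->] : i \notin I' by rewrite I'0 inE.
have [I'T | I'nT] := eqVneq I' setT.
  suff -> : t4 = t3 by [].
  by apply/F_inj/ffunP => i; have /F_in[_ ->] : i \in I' by rewrite I'T inE.
have m'_gt1 : 1 < m'.
  rewrite -[m']card_ord -cardsT; apply: (@leq_ltn_trans #|I'|).
    by rewrite card_gt0.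
  by rewrite proper_card ?properT.
rewrite RF; apply: (R'_rect m'_gt1 I' I'n0 I'nT (F t1) (F t2) (F t3) (F t4)) => //.
all: by rewrite -RF.
Qed.

Lemma pd_blocks_disj (M : msstr) m (D : ppdef M m) v :
  count (fun B : {set pd_V D} => v \in B) (pd_blocks D) <= 1.
Proof. by rewrite -(pd_part v) leq_addl. Qed.

Lemma pd_fv_free (M : msstr) m (D : ppdef M m) j :
  ~~ has (fun B : {set pd_V D} => pd_fv D j \in B) (pd_blocks D).
Proof.
by have /eqP := pd_part (pd_fv D j); rewrite codom_f add1n eqSS has_count => /eqP ->.
Qed.

Section PPDefTranslation.
Local Unset Implicit Arguments.
Variables (k : nat) (H : 'I_k -> finType) (n : nat) (ar : 'I_n -> nat)
  (sig : forall r : 'I_n, 'I_(ar r) -> 'I_k)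
  (Q : forall r : 'I_n, pred {dffun forall j : 'I_(ar r), H (sig r j)}).
Variables (p m : nat) (D : ppdef (binarize Q) m).
Local Set Implicit Arguments.

Local Notation BS := (bsort k H n ar sig Q).
Local Notation tg := (Tagged H).
Local Notation V := (pd_V D).
Local Notation vs := (@pd_vs _ _ D).
Local Notation fv := (@pd_fv _ _ D).
Local Notation V' := {v : V & 'I_(ar (vs v))}.

(* A variable v of sort Q_l is split into ar(Q_l) variables of H, one for
   each coordinate of v. *)
Definition vs' (x : V') : ms_S (mkH Q) := sig (vs (tag x)) (tagged x).
Definition tv (v : V) (s : 'I_(ar (vs v))) : V' := Tagged (fun v => 'I_(ar (vs v))) s.

Definition flat (a : assign vs) : assign vs' :=
  finfun (fun x : V' => val (a (tag x)) (tagged x)).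

Lemma flatE a v s : flat a (tv s) = val (a v) s.
Proof. by rewrite ffunE. Qed.

Definition Qsat (a' : assign vs') (v : V) : bool :=
  Q (vs v) (finfun (fun s => a' (tv s))).

Lemma Qsat_flat a v : Qsat (flat a) v.
Proof.
rewrite /Qsat; have -> : finfun (fun s => flat a (tv s)) = val (a v).
  by apply/ffunP => s; rewrite !ffunE.
exact: valP.
Qed.

Definition unflat (a0 : assign vs) (a' : assign vs') : assign vs :=
  finfun (fun v => insubd (a0 v) (finfun (fun s => a' (tv s)))).

Lemma flat_unflat a0 a' x : Qsat a' (tag x) -> flat (unflat a0 a') x = a' x.
Proof. by case: x => v s Qv; rewrite /= flatE ffunE insubdK // ffunE. Qed.

Definition Qatom (v : V) : atom vs' :=
  @ARel (mkH Q) V' vs' (vs v) (fun s => tv s) (fun s => erefl).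

Lemma sig_cast (i j : 'I_n) (e : i = j) (s : 'I_(ar i)) :
  sig i s = sig j (cast_ord (congr1 ar e) s).
Proof. by case: j / e; rewrite cast_ord_id. Qed.

(* An atom R^{ij}_{st}(u, w) becomes the equality of coordinate s of u with
   coordinate t of w, or nothing when these coordinates have different sorts
   (then the atom is unsatisfiable); an equality of sort Q_i becomes ar(Q_i)
   coordinatewise equalities. *)
Definition trans_atom (t : atom vs) : seq (atom vs') :=
  match t with
  | ARel r args h =>
     let s := tv (cast_ord (congr1 ar (esym (h ord0))) (bs n ar r)) in
     let t := tv (cast_ord (congr1 ar (esym (h ord_max))) (bt n ar r)) in
     match vs' s =P vs' t with
     | ReflectT e => [:: @AEq _ _ vs' s t e]
     | ReflectF _ => [::]
     end
  | AEq u w h => [seq @AEq _ _ vs' (tv s) (tv (cast_ord (congr1 ar h) s)) (sig_cast h s)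
                   | s <- enum 'I_(ar (vs u))]
  end.

Lemma Tagged_val_scast (i j : 'I_n) (e : i = j) (X : BS i) (s : 'I_(ar j)) :
  tg (val (@scast _ BS _ _ e X) s) = tg (val X (cast_ord (congr1 ar (esym e)) s)).
Proof. by case: j / e s => s /=; rewrite cast_ord_id. Qed.

Lemma scast_eqBS (i j : 'I_n) (e : i = j) (X : BS i) (Y : BS j) :
  (@scast _ BS _ _ e X == Y) =
  [forall s, tg (val X s) == tg (val Y (cast_ord (congr1 ar e) s))].
Proof.
case: j / e Y => Y /=; apply/eqP/forallP => [-> s | eXY]; first by rewrite cast_ord_id.
apply/val_inj/ffunP => s; apply/Tagged_inj/eqP.
by have := eXY s; rewrite cast_ord_id.
Qed.

Lemma ARel_sat (a : assign vs) r args h :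
  atom_sat a (@ARel _ _ vs r args h) =
  (tg (val (a (args ord0)) (cast_ord (congr1 ar (esym (h ord0))) (bs n ar r))) ==
   tg (val (a (args ord_max)) (cast_ord (congr1 ar (esym (h ord_max))) (bt n ar r)))).
Proof. by rewrite /= brelE !ffunE !Tagged_val_scast. Qed.

Lemma trans_atom_sat (t : atom vs) :
  (forall a, all (atom_sat (flat a)) (trans_atom t) = atom_sat a t) \/
  (forall a, atom_sat a t = false).
Proof.
case: t => [r args h | u w h].
  rewrite /trans_atom; case: eqP => [e | ne]; [left | right] => a; rewrite ARel_sat.
    by rewrite /= andbT scast_eqE !flatE.
  by apply/negbTE/eqP => /(congr1 tag).
left => a; rewrite /= scast_eqBS all_map.
apply/allP/forallP => [eq_at s | eq_at s _] /=.
  by have := eq_at s (mem_enum _ s); rewrite /= scast_eqE !flatE.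
by rewrite scast_eqE !flatE; apply: eq_at.
Qed.

Definition trans_atoms (ts : seq (atom vs)) : seq (atom vs') :=
  flatten (map trans_atom ts).

Lemma trans_atoms_sat ts :
  (forall a, all (atom_sat (flat a)) (trans_atoms ts) = all (atom_sat a) ts) \/
  (forall a, all (atom_sat a) ts = false).
Proof.
elim: ts => [|t ts IH]; first by left.
case: (trans_atom_sat t) => [t_ok | t_bad]; last by right => a; rewrite /= t_bad.
case: IH => [ts_ok | ts_bad]; last by right => a; rewrite /= ts_bad andbF.
by left => a; rewrite /trans_atoms /= all_cat t_ok ts_ok.
Qed.

Definition atoms' : seq (atom vs') :=
  [seq Qatom v | v <- enum V] ++ trans_atoms (pd_atoms D).

Local Notation Phi := (fun b : assign vs => all (atom_sat b) (pd_atoms D)).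
Local Notation Phi' := (fun b : assign vs' => all (atom_sat b) atoms').

Lemma Phi'_Qsat b v : Phi' b -> Qsat b v.
Proof. by rewrite /= /atoms' all_cat all_map => /andP[/allP/(_ v (mem_enum _ v))]. Qed.

Definition lift_block (B : {set V}) : {set V'} := [set x | tag x \in B].

Lemma blocks_sat_Qsat (bs : seq {set V}) a' (v : V) :
  ~~ has (fun B : {set V} => v \in B) bs -> ~~ Qsat a' v ->
  blocks_sat p Phi' (map lift_block bs) a' = false.
Proof.
elim: bs a' => [|B bs IH] a' /= v_nin nQ.
  by apply/negbTE; apply: contra nQ => /Phi'_Qsat.
rewrite negb_or in v_nin; case/andP: v_nin => vB v_nin.
apply/negbTE; rewrite negbK (_ : #|_| = 0) ?mod0n //.
apply: eq_card0 => b'; apply/negbTE/andP => -[/forallP agree].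
suff e : Qsat b' v = Qsat a' v by rewrite IH // e.
congr (Q _ _); apply/ffunP => s; rewrite !ffunE.
by have := agree (tv s); rewrite inE /= (negbTE vB) => /eqP.
Qed.

Definition free_coord : finType := {j : 'I_m & 'I_(ar (vs (fv j)))}.

Definition free_coord_at j (s : 'I_(ar (vs (fv j)))) : free_coord :=
  Tagged (fun j => 'I_(ar (vs (fv j)))) s.

Definition fv' (i : 'I_#|free_coord|) : V' := tv (tagged (enum_val i : free_coord)).

Lemma fv'_inj : injective fv'.
Proof.
move=> i1 i2; rewrite /fv' => e; apply: enum_val_inj.
move: (enum_val i1) (enum_val i2) e => [j1 s1] [j2 s2] /= e.
have ej := pd_fv_inj (congr1 tag e); subst j2.
by move/eqP: e; rewrite eq_Tagged /= => /eqP ->.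
Qed.

Lemma codom_fv' (x : V') : (x \in codom fv') = (tag x \in codom fv).
Proof.
apply/codomP/codomP => [[i ->] | [j]]; first by exists (tag (enum_val i : free_coord)).
case: x => v s /= e; subst v.
by exists (enum_rank (free_coord_at s)); rewrite /fv' enum_rankK.
Qed.

Lemma pd_part' (x : V') :
  ((x \in codom fv') : nat)
    + count (fun B : {set V'} => x \in B) (map lift_block (pd_blocks D)) = 1.
Proof.
rewrite codom_fv' count_map -(pd_part (tag x)); congr (_ + _).
by apply: eq_count => B /=; rewrite inE.
Qed.

Definition D' : ppdef (mkH Q) #|free_coord| :=
  @PPDef (mkH Q) #|free_coord| V' vs' fv' (map lift_block (pd_blocks D)) atoms'
    fv'_inj pd_part'.

Definition flat_tup (x : pd_tup D) : pd_tup D' :=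
  finfun (fun i => val (x (tag (enum_val i : free_coord)))
                       (tagged (enum_val i : free_coord))).

Lemma flx_inj : injective flat_tup.
Proof.
move=> x y /ffunP e; apply/ffunP => j; apply/val_inj/ffunP => s.
have := e (enum_rank (free_coord_at s)).
by rewrite !ffunE /D' /fv' /= enum_rankK.
Qed.

Section SatisfiableAtoms.
Hypothesis trans_atoms_flat :
  forall a, all (atom_sat (flat a)) (trans_atoms (pd_atoms D)) = Phi a.

Lemma Phi'_flat a : Phi' (flat a) = Phi a.
Proof.
rewrite /= /atoms' all_cat trans_atoms_flat all_map.
by rewrite (introT allP) // => v _; apply: Qsat_flat.
Qed.

Definition patch (B : {set V}) (b : assign vs) (a' : assign vs') : assign vs' :=
  finfun (fun x => if tag x \in B then flat b x else a' x).

(* The B-extensions of [a] and of [a'] correspond bijectively through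
   [patch B _ a']. *)
Lemma blocks_sat_flat_cons (B : {set V}) (bs : seq {set V})
    (a : assign vs) (a' : assign vs') :
  (forall v, v \in B -> ~~ has (fun C : {set V} => v \in C) bs) ->
  (forall (b : assign vs) (b' : assign vs'),
     (forall x, ~~ has (fun C : {set V} => tag x \in C) bs -> flat b x = b' x) ->
     blocks_sat p Phi' (map lift_block bs) b' = blocks_sat p Phi bs b) ->
  (forall x, ~~ has (fun C : {set V} => tag x \in C) (B :: bs) -> flat a x = a' x) ->
  blocks_sat p Phi' (map lift_block (B :: bs)) a' = blocks_sat p Phi (B :: bs) a.
Proof.
move=> B_disj IH agree /=; congr (_ %% p != 0).
have patch_sat (b : assign vs) : [forall v, (v \notin B) ==> (b v == a v)] ->
    blocks_sat p Phi' (map lift_block bs) (patch B b a') = blocks_sat p Phi bs b.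
  move=> /forallP b_a; apply: IH => x x_nin; rewrite [RHS]ffunE; case: ifP => // xB.
  rewrite -agree /= ?xB // !ffunE.
  by move: (b_a (tag x)); rewrite xB => /eqP ->.
set S := [pred b : assign vs | _].
have patch_inj : {in S &, injective (fun b => patch B b a')}.
  move=> b1 b2 /andP[/forallP b1_a _] /andP[/forallP b2_a _] e.
  apply/ffunP => v; case vB: (v \in B).
    by apply/val_inj/ffunP => s; move/ffunP: e => /(_ (tv s)); rewrite !ffunE /= vB.
  by move: (b1_a v) (b2_a v); rewrite vB => /eqP -> /eqP ->.
rewrite -(card_in_imset patch_inj); apply: eq_card => b'; rewrite inE.
apply/idP/imsetP => [/andP[/forallP b'_a' b'_sat] | [b /andP[b_a b_sat] ->]]; last first.
  rewrite patch_sat // b_sat andbT; apply/forallP => x; apply/implyP.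
  by rewrite inE ffunE => /negbTE ->.
have Qb' v : v \in B -> Qsat b' v.
  move=> vB; apply/negPn/negP => nQ.
  by move: b'_sat; rewrite (blocks_sat_Qsat (B_disj v vB) nQ).
pose b : assign vs := finfun (fun v => if v \in B then unflat a b' v else a v).
have b_a : [forall v, (v \notin B) ==> (b v == a v)].
  by apply/forallP => v; apply/implyP => /negbTE vB; rewrite ffunE vB.
have eb' : b' = patch B b a'.
  apply/ffunP => x; rewrite ffunE; case: ifP => xB.
    by rewrite -(flat_unflat a (Qb' _ xB)) !ffunE xB.
  by move: (b'_a' x); rewrite inE xB => /eqP.
by exists b; rewrite // inE b_a -patch_sat // -eb'.
Qed.

Lemma blocks_sat_flat (bs : seq {set V}) :
  (forall v, count (fun B : {set V} => v \in B) bs <= 1) ->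
  forall (a : assign vs) (a' : assign vs'),
  (forall x, ~~ has (fun B : {set V} => tag x \in B) bs -> flat a x = a' x) ->
  blocks_sat p Phi' (map lift_block bs) a' = blocks_sat p Phi bs a.
Proof.
elim: bs => [|B bs IH] bs_disj a a' agree.
  suff -> : a' = flat a by apply: Phi'_flat.
  by apply/ffunP => x; rewrite agree.
apply: blocks_sat_flat_cons agree => [v vB | ].
  by have := bs_disj v; rewrite /= vB has_count; case: count.
by apply: IH => v; apply: leq_trans (bs_disj v); apply: leq_addl.
Qed.

Lemma pd_rel_flat_tup (x : pd_tup D) : pd_rel p x = pd_rel p (flat_tup x).
Proof.
have sat_eq := blocks_sat_flat (@pd_blocks_disj _ _ D).
apply/existsP/existsP => [[a /andP[/forallP a_x a_sat]] |
                          [a' /andP[/forallP a'_x a'_sat]]].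
  exists (flat a); rewrite /= (sat_eq a) // a_sat andbT.
  by apply/forallP => i; rewrite !ffunE (eqP (a_x _)).
have [b0 /Phi'_Qsat b0_Q] := blocks_sat_witness a'_sat.
pose a0 : assign vs :=
  finfun (fun v => Sub (finfun (fun s => b0 (tv s))) (b0_Q v) : BS (vs v)).
have agree z : ~~ has (fun B : {set V} => tag z \in B) (pd_blocks D) ->
    flat (unflat a0 a') z = a' z.
  move=> z_free; apply: flat_unflat; apply/negPn/negP => nQ.
  by move: a'_sat; rewrite /= (blocks_sat_Qsat z_free nQ).
exists (unflat a0 a'); rewrite -(sat_eq _ _ agree) a'_sat andbT.
apply/forallP => j; apply/eqP/val_inj/ffunP => s.
rewrite -flatE agree ?pd_fv_free //.
have := a'_x (enum_rank (free_coord_at s)).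
by rewrite ffunE /D' /fv' /= enum_rankK => /eqP.
Qed.

End SatisfiableAtoms.

Lemma rectangular_pd_binarize :
  strongly_p_rect p (mkH Q) -> rectangular (pd_rel p (D:=D)).
Proof.
move=> rectH; case: (trans_atoms_sat (pd_atoms D)) => [ok | bad].
  apply: (rectangular_pullback (c := fun i => tag (enum_val i : free_coord))
    flx_inj _ (pd_rel_flat_tup ok)) => [x y i | m_gt1].
    by rewrite !ffunE => ->.
  exact: rectH.
move=> I _ _ t1 t2 t3 t4 _ _ /pd_rel_witness[b b_sat].
by exfalso; move: b_sat; rewrite bad.
Qed.

End PPDefTranslation.

Lemma strongly_p_rect_binarize k (H : 'I_k -> finType) n (ar : 'I_n -> nat)
  (sig : forall r : 'I_n, 'I_(ar r) -> 'I_k)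
  (Q : forall r : 'I_n, pred {dffun forall j : 'I_(ar r), H (sig r j)}) p :
  strongly_p_rect p (mkH Q) -> strongly_p_rect p (binarize Q).
Proof. by move=> rectH m D _; apply: rectangular_pd_binarize. Qed.

Theorem proposition9p2 (k : nat) (H : 'I_k -> finType) (n : nat)
  (ar : 'I_n -> nat) (sig : forall r : 'I_n, 'I_(ar r) -> 'I_k)
  (Q : forall r : 'I_n, pred {dffun forall j : 'I_(ar r), H (sig r j)})
  (p : nat) :
  prime p ->
  (forall i : 'I_k, exists r : 'I_n,
      ar r = 1 /\ (forall j, sig r j = i) /\ (forall x, Q r x)) ->
  [/\ has_maltsev (mkH Q) <-> has_maltsev (binarize Q),
      p_rigid p (mkH Q) <-> p_rigid p (binarize Q)
    & strongly_p_rect p (mkH Q) -> strongly_p_rect p (binarize Q)].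
Proof.
move=> p_pr unary.
have unary_b i : exists r, [&& ar r == 1, [forall j, sig r j == i] & [forall x, Q r x]].
  have [r [ar1 [sig_r Q_r]]] := unary i; exists r.
  by apply/and3P; split; [apply/eqP | apply/forallP => j; apply/eqP | apply/forallP].
pose ur i := xchoose (unary_b i).
have ur_spec i := and3P (xchooseP (unary_b i)).
have ur_ar i : ar (ur i) = 1 by case: (ur_spec i) => /eqP.
have ur_sig i j : sig (ur i) j = i by case: (ur_spec i) => _ /forallP/(_ j)/eqP.
have ur_full i x : Q (ur i) x by case: (ur_spec i) => _ _ /forallP.
split; [exact: (has_maltsev_binarize ur_ar ur_sig ur_full)
       | exact: (p_rigid_binarize ur_ar ur_sig ur_full p_pr)
       | exact: strongly_p_rect_binarize].
Qed.
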